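(* Let $k\ge1$, $n=2k-1$, $T^n=(\mathbb{R}/k\mathbb{Z})^n$, let $X_0=\{\mathbf{x}_\sigma:\mathbf{x}\in[0,1]^2\times[0,2]^2\times\cdots\times[0,k-1]^2\times[0,k],\ \sigma\in S_n\}\subset T^n$ and $X_i=X_0+(i,\dots,i)$ for $i\in\mathbb{Z}_k$. Then $X_0\cup X_1\cup\cdots\cup X_{k-1}=T^n$.
   Context: $\mathbf{x}_\sigma=(x_{\sigma(1)},\dots,x_{\sigma(n)})$ for $\sigma\in S_n$; $[0,j]^2$ denotes two Cartesian factors equal to $[0,j]$, so the product has $n$ factors; products of real intervals are regarded as subsets of $T^n$ via the quotient map $\mathbb{R}^n\to(\mathbb{R}/k\mathbb{Z})^n$; $X_0+(i,\dots,i)=\{\mathbf{x}+(i,\dots,i):\mathbf{x}\in X_0\}$. *)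

From Stdlib Require Import Reals ZArith.
From mathcomp Require Import all_boot all_fingroup.
Set Implicit Arguments. Unset Strict Implicit. Unset Printing Implicit Defensive.

Local Open Scope R_scope.

Definition dim (k : nat) : nat := (2 * k - 1)%N.

(* a point of R^n, regarded as a point of T^n = (R/kZ)^n *)
Definition pt (k : nat) := 'I_(dim k) -> R.

Definition congr_mod (k : nat) (a b : R) : Prop :=
  exists z : Z, a - b = INR k * IZR z.

(* The box [0,1]^2 x [0,2]^2 x ... x [0,k-1]^2 x [0,k]: the 0-based coordinate j
   ranges in [0, j/2 + 1]. *)
Definition in_box (k : nat) (x : pt k) : Prop :=
  forall j : 'I_(dim k), 0 <= x j <= INR (j./2 + 1).

Definition permute (k : nat) (s : 'S_(dim k)) (x : pt k) : pt k :=
  fun j => x (s j).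

Definition in_X0 (k : nat) (y : pt k) : Prop :=
  exists (x : pt k) (s : 'S_(dim k)),
    in_box x /\ forall j, congr_mod k (y j) (permute s x j).

Definition in_Xi (k : nat) (i : nat) (y : pt k) : Prop :=
  in_X0 (fun j => y j - INR i).

(** Write y_j = z_j + t_j with z_j an integer and t_j in [0,1).  Shifting by
    (i,...,i) replaces z_j by the level c_j = (z_j - i) mod k, since
    y_j - i is congruent to t_j + c_j in [c_j, c_j + 1].  Such a point lies
    in X_0 as soon as, once the coordinates are sorted by level, the one in
    (0-based) position p has level at most p/2; this holds when for every
    c < k at least 2c coordinates have level below c.  A cycle-lemma argument
    produces a good shift: if F(m) counts the coordinates with z_j mod k < m,
    take for i the least minimiser of F(i) - 2i; there are 2k - 1 coordinates,
    which is exactly what the wrap-around case needs. *)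
From Stdlib Require Import Reals ZArith Lra Lia.
From mathcomp Require Import all_boot all_fingroup zify.
Set Implicit Arguments. Unset Strict Implicit. Unset Printing Implicit Defensive.

Lemma card_set_sum (T : finType) (P : pred T) :
  #|[set j | P j]| = \sum_j (P j : nat).
Proof.
by rewrite -sum1_card big_mkcond /=; apply: eq_bigr => j _; rewrite inE; case: (P j).
Qed.

Section CycleLemma.

Variables (T : finType) (k : nat) (beta : T -> nat).
Hypothesis beta_lt : forall j, beta j < k.

Let F m := #|[set j | beta j < m]|.

(* (b + k - i) %% k is (b - i) mod k, written so that no subtraction truncates *)
Lemma rot_lt_indicator i c b : b < k -> i < k -> c < k ->
  ((b + k - i) %% k < c) + (b < i) =
  if i + c < k then (b < i + c : nat) else 1 + (b < i + c - k).
Proof.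
move=> bk ik ck.
have -> : (b + k - i) %% k = if i <= b then b - i else b + k - i.
  case: (leqP i b) => ib; last by rewrite modn_small //; lia.
  by rewrite (_ : b + k - i = b - i + k) ?modnDr ?modn_small //; lia.
by case: (leqP i b) => ?; case: (ltnP (i + c) k) => ?; repeat case: ltnP => ?; lia.
Qed.

Lemma card_rot_lt i c : i < k -> c < k ->
  #|[set j | (beta j + k - i) %% k < c]| + F i =
  if i + c < k then F (i + c) else #|T| + F (i + c - k).
Proof.
move=> ik ck; rewrite /F !card_set_sum -big_split /=.
under eq_bigr => j _ do rewrite rot_lt_indicator //.
by case: ifP => _ //; rewrite big_split /= sum1_card.
Qed.

Hypothesis card_T : 2 * k <= #|T|.+1.

Lemma exists_good_rotation : 0 < k ->
  exists2 i, i < k & forall c, c < k ->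
    2 * c <= #|[set j | (beta j + k - i) %% k < c]|.
Proof.
move=> k_gt0; pose M m := F m + 2 * (k - m).
have minimizer : exists i, (i < k) && [forall r : 'I_k, M i <= M r].
  have [i _ Mi_min] := @arg_minnP _ (Ordinal k_gt0) xpredT (fun r : 'I_k => M r) isT.
  by exists i; rewrite ltn_ord; apply/forallP => r; apply: Mi_min.
have [i /andP [ik /forallP Mi_min] i_least] := ex_minnP minimizer.
exists i => // c ck; have := card_rot_lt ik ck.
case: ifP => [ick | icNk].
  by have := Mi_min (Ordinal ick); rewrite /M /=; lia.
(* i + c - k < i, so it is not a minimiser by the choice of i as the least one *)
have [r Mr_lt] : exists r : 'I_k, M r < M (i + c - k).
  apply/existsP/contraT; rewrite negb_exists => /forallP Mr_min.
  have /i_least : (i + c - k < k) && [forall r : 'I_k, M (i + c - k) <= M r].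
    by apply/andP; split; [lia | apply/forallP => r; rewrite leqNgt Mr_min].
  lia.
by have := Mi_min r; move: Mr_lt; rewrite /M; lia.
Qed.

End CycleLemma.

Section Ranking.

Variables (n : nat) (key : 'I_n -> nat).
Hypothesis key_inj : injective key.

Lemma rank_lt j : #|[set j' | key j' < key j]| < n.
Proof.
rewrite -[X in _ < X](card_ord n) -cardsT; apply: proper_card; apply/properP.
by split; [apply: subsetT | exists j; rewrite ?inE ?ltnn].
Qed.

Definition rank j : 'I_n := Ordinal (rank_lt j).

Lemma rank_mono a b : key a < key b -> rank a < rank b.
Proof.
move=> ab; apply: proper_card; apply/properP; split; last by exists a; rewrite !inE ?ltnn.
by apply/subsetP => v; rewrite !inE => /ltn_trans; apply.
Qed.

Lemma rank_inj : injective rank.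
Proof.
move=> a b eq_rank; apply: key_inj.
by case: (ltngtP (key a) (key b)) => // /rank_mono; rewrite eq_rank ltnn.
Qed.

End Ranking.

Lemma exists_perm_sorting n (c : 'I_n -> nat) :
  exists s : 'S_n, forall j, #|[set j' | c j' < c j]| <= s j.
Proof.
(* break ties between equal levels by the index *)
pose key j := c j * n + j.
have key_inj : injective key.
  move=> a b /(congr1 (modn^~ n)); rewrite !modnMDl !modn_small //.
  by move=> /val_inj.
exists (perm (rank_inj key_inj)) => j; rewrite permE /=.
apply: subset_leq_card; apply/subsetP => v; rewrite !inE /key.
by have := ltn_ord v; have := ltn_ord j; nia.
Qed.

Local Open Scope R_scope.

Lemma in_X0_of_levels k (y w : pt k) (c : 'I_(dim k) -> nat) :
  (forall j, (2 * c j <= #|[set j' | c j' < c j]|)%N) ->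
  (forall j, INR (c j) <= w j <= INR (c j) + 1) ->
  (forall j, congr_mod k (y j) (w j)) ->
  in_X0 y.
Proof.
move=> many_below w_level y_w.
have [s s_rank] := exists_perm_sorting c.
exists (fun p => w ((s^-1)%g p)), s; split=> [p | j]; last by rewrite /permute permK.
set j := (s^-1)%g p.
have cj_le : (c j <= p./2)%N.
  rewrite -[p](permKV s) -/j geq_half_double -mul2n.
  exact: leq_trans (many_below j) (s_rank j).
have := w_level j; have := pos_INR (c j).
move/le_INR: (leP cj_le); rewrite plus_INR /=; lra.
Qed.

Definition residue (k : nat) (z : Z) : nat := Z.to_nat (z mod Z.of_nat k).

Lemma residue_lt k z : (0 < k)%N -> (residue k z < k)%N.
Proof. by move=> k_gt0; have := Z.mod_pos_bound z (Z.of_nat k); rewrite /residue; lia. Qed.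

Lemma congr_mod_residue_shift k (i : nat) (z : Z) (r : R) : (0 < k)%N -> (i <= k)%N ->
  congr_mod k (IZR z + r - INR i) (INR ((residue k z + k - i) %% k) + r).
Proof.
move=> k_gt0 ik.
have [q z_eq] : exists q, (z - Z.of_nat i = Z.of_nat k * q
                           + Z.of_nat ((residue k z + k - i) %% k))%Z.
  exists (z / Z.of_nat k - 1 + Z.of_nat ((residue k z + k - i) %/ k))%Z.
  move: (Z.mod_pos_bound z (Z.of_nat k)) (Z_div_mod_eq_full z (Z.of_nat k)).
  move: (divn_eq (residue k z + k - i) k); rewrite /residue.
  move: (z mod _)%Z (z / _)%Z (_ %/ k)%N (_ %% k)%N => m q d e; nia.
exists q; rewrite !INR_IZR_INZ -mult_IZR.
have := congr1 IZR z_eq; rewrite minus_IZR plus_IZR mult_IZR; lra.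
Qed.

Theorem lemmaL (k : nat) (hk : (1 <= k)%N) (y : pt k) :
  exists i : 'I_k, in_Xi i y.
Proof.
pose z j := Int_part (y j).
pose beta j := residue k (z j).
have beta_lt j : (beta j < k)%N by apply: residue_lt.
have card_dim : (2 * k <= #|'I_(dim k)|.+1)%N by rewrite card_ord /dim; lia.
have [i ik good] := exists_good_rotation beta_lt card_dim hk.
pose c j := ((beta j + k - i) %% k)%N.
exists (Ordinal ik).
apply: (@in_X0_of_levels _ _ (fun j => INR (c j) + (y j - IZR (z j))) c).
- by move=> j; apply: good; rewrite ltn_mod.
- by move=> j; have := base_Int_part (y j); rewrite -/(z j); lra.
- move=> j; have := congr_mod_residue_shift (z j) (y j - IZR (z j)) hk (ltnW ik).
  by rewrite Rplus_minus.
Qed.
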